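(* Let $f_i:\mathbb{R}^n\to(-\infty,+\infty]$ be proper, lower semicontinuous and prox-bounded with thresholds $\lambda_{f_i}>0$, $i=1,2$, and let $0<\lambda<\min\{\lambda_{f_1},\lambda_{f_2}\}$. Consider: (a) $\partial_p^\lambda f_1=\partial_p^\lambda f_2$; (b) $P_\lambda f_1=P_\lambda f_2$; (c) there is $c\in\mathbb{R}$ with $e_\lambda f_1=e_\lambda f_2+c$; (d) there is $c\in\mathbb{R}$ with $h_\lambda f_1=h_\lambda f_2+c$; (e) there is $c\in\mathbb{R}$ with $\overline{\operatorname{conv}}f_1=\overline{\operatorname{conv}}f_2+c$, provided $\operatorname{conv}f_i$ is proper for $i=1,2$. Then (a)$\Leftrightarrow$(b)$\Rightarrow$(c)$\Leftrightarrow$(d), and (a)$\Rightarrow$(e).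
   Context: $e_\lambda f(x):=\inf_y\{f(y)+\frac1{2\lambda}\|y-x\|^2\}$, $P_\lambda f(x):=\operatorname{argmin}_y\{f(y)+\frac1{2\lambda}\|y-x\|^2\}$; prox-bounded with threshold $\lambda_f=\sup\{\lambda>0:e_\lambda f(x)>-\infty\text{ for some }x\}$. $v\in\partial_p^\lambda f(x)$ iff $x\in\operatorname{dom}f$ and $f(y)\ge f(x)+\langle v,y-x\rangle-\frac1{2\lambda}\|y-x\|^2$ for all $y$. $h_\lambda f:=-e_\lambda(-e_\lambda f)$. $\operatorname{conv}f$ and $\overline{\operatorname{conv}}f$ are the convex hull and the lsc convex hull of $f$. *)

(* R : realType, points of R^n are row vectors 'rV[R]_n
   (with the product = Euclidean topology), functions take values in \bar R. *)
From HB Require Import structures.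
From mathcomp Require Import all_boot all_order all_algebra.
From mathcomp Require Import all_classical all_reals all_analysis.
Set Implicit Arguments. Unset Strict Implicit. Unset Printing Implicit Defensive.
Import Order.TTheory GRing.Theory Num.Theory.
Import numFieldNormedType.Exports.
Local Open Scope classical_set_scope.
Local Open Scope ring_scope.

Section Defs.
Context {R : realType} {n : nat}.
Local Notation V := 'rV[R]_n.

Definition dotp (u v : V) : R := \sum_(i < n) u ord0 i * v ord0 i.
Definition sqnorm (u : V) : R := dotp u u.

Definition qpen (lam : R) (x y : V) : R := sqnorm (y - x) / (2 * lam).

Local Open Scope ereal_scope.

Definition proper_fun (f : V -> \bar R) : Prop :=
  (forall x, f x != -oo) /\ (exists x, f x < +oo).

Definition menv (lam : R) (f : V -> \bar R) (x : V) : \bar R :=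
  ereal_inf [set f y + (qpen lam x y)%:E | y in [set: V]].

(* proximal mapping  P_lam f x = argmin_y { f y + ||y-x||^2/(2 lam) }
   (argmin in the sense of Rockafellar-Wets: empty when the inf is +oo) *)
Definition prox (lam : R) (f : V -> \bar R) (x : V) : set V :=
  [set y | f y + (qpen lam x y)%:E = menv lam f x /\ menv lam f x != +oo].

Definition prox_bounded (f : V -> \bar R) : Prop :=
  exists lam : R, (0 < lam)%R /\ exists x, menv lam f x > -oo.

Definition prox_threshold (f : V -> \bar R) : \bar R :=
  ereal_sup [set lam%:E | lam in [set lam : R | (0 < lam)%R /\
                                   exists x, menv lam f x > -oo]].

Definition psubdiff (lam : R) (f : V -> \bar R) (x : V) : set V :=
  [set v | f x < +oo /\ forall y,
     f x + (dotp v (y - x) - qpen lam x y)%:E <= f y].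

Definition hfun (lam : R) (f : V -> \bar R) (x : V) : \bar R :=
  - menv lam (fun y => - menv lam f y) x.

(* convexity of an extended-real-valued function (convexity of its epigraph) *)
Definition convex_efun (g : V -> \bar R) : Prop :=
  forall (x y : V) (a b t : R), g x <= a%:E -> g y <= b%:E ->
    (0 <= t <= 1)%R ->
    g ((1 - t) *: x + t *: y)%R <= ((1 - t) * a + t * b)%:E.

Definition convhull (f : V -> \bar R) (x : V) : \bar R :=
  ereal_sup [set g x | g in [set g : V -> \bar R | convex_efun g /\
                                                   (forall z, g z <= f z)]].

Definition cconvhull (f : V -> \bar R) (x : V) : \bar R :=
  ereal_sup [set g x | g in [set g : V -> \bar R | convex_efun g /\
                   lower_semicontinuous g /\ (forall z, g z <= f z)]].

End Defs.

From HB Require Import structures.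
From mathcomp Require Import all_boot all_order all_algebra.
From mathcomp Require Import all_classical all_reals all_analysis.
From mathcomp Require Import ring lra.
Set Implicit Arguments. Unset Strict Implicit. Unset Printing Implicit Defensive.
Import Order.TTheory GRing.Theory Num.Theory.
Import numFieldNormedType.Exports.
Local Open Scope classical_set_scope.
Local Open Scope ring_scope.

(** The identity [v \in psubdiff lam f x <-> x \in prox lam f (x + lam v)]
  gives (a) <-> (b). If the proximal maps agree, fix a common selection [P]:
  each envelope satisfies [e x - e z <= q(x, P z) - q(z, P z)], so the
  increments of [e_lam f1 - e_lam f2] are bounded by [<x - z, P x - P z>/lam],
  and summing over ever finer subdivisions of a segment shows that the
  difference is constant, (b) -> (c). Since [h_lam f = - e_lam (- e_lam f)]
  only depends on [e_lam f] and [e_lam (h_lam f) = e_lam f], (c) <-> (d).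
  For (e), every lsc convex minorant [g] of [f] lies below [h_lam f]: if [g] is
  finite somewhere, proximal points of [g] for small parameters produce affine
  minorants of [g] that [h_lam f] dominates; otherwise [g] only takes the values
  [+oo] and [-oo], and a halfspace separating [x] from [dom f] forces
  [h_lam f x = +oo]. As [h_lam f <= f], the closed convex hulls of [f1] and
  [f2] are those of [h_lam f1] and [h_lam f2], which differ by a constant.
  Proximal points exist below the prox-threshold because [f] then has a
  quadratic minorant, which makes the sublevel sets of [f + q(x, .)] compact. *)

Lemma eq0_of_le_div_nat {R : archiRealFieldType} (t K : R) :
  (forall N : nat, (0 < N)%N -> `|t| <= K / N%:R) -> t = 0.
Proof.
move=> tK; apply/eqP; apply: contraT => t0; have t_gt0 : 0 < `|t| by rewrite normr_gt0.
have K0 : 0 <= K by have := tK 1%N isT; rewrite divr1; apply: le_trans.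
have KN := archi_boundP (divr_ge0 K0 (ltW t_gt0)); set N := Num.bound _ in KN.
have N0 : (0 < N)%N.
  by rewrite lt0n; apply: contraTneq KN => ->; rewrite -leNgt divr_ge0 // ltW.
move: KN (tK N N0); rewrite ltr_pdivrMr // ler_pdivlMr ?ltr0n //; lra.
Qed.

Lemma le0_of_le_mul_small {R : realFieldType} (D S : R) : 0 <= S ->
  (forall t, 0 < t <= 1 -> D <= t * S) -> D <= 0.
Proof.
move=> S0 DS; rewrite leNgt; apply/negP => D0.
have den : 0 < D + S + 1 by lra.
have := DS (D / (D + S + 1)); rewrite divr_gt0 ?ler_pdivrMr // mul1r.
rewrite mulrAC ler_pdivlMr //; nra.
Qed.

Section ExtendedReals.
Context {R : realFieldType}.
Local Open Scope ereal_scope.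
Implicit Types x y : \bar R.

Lemma lte_EFin_between x y : x < y -> exists r : R, x < r%:E < y.
Proof.
case: x => [x| |]; case: y => [y| |] //= xy.
- by exists ((x + y) / 2)%R; rewrite !lte_fin; move: xy; rewrite lte_fin; lra.
- by exists (x + 1)%R; rewrite lte_fin ltry andbT; lra.
- by exists (y - 1)%R; rewrite lte_fin ltNyr; lra.
- by exists 0%R; rewrite ltry ltNyr.
Qed.

Lemma lee_of_EFin_lt x y : (forall r : R, r%:E < x -> r%:E <= y) -> x <= y.
Proof.
move=> xy; rewrite leNgt; apply/negP => /lte_EFin_between[r /andP[yr rx]].
by have := xy r rx; rewrite leNgt yr.
Qed.

Lemma EFin_le_of_ub (L : R) y :
  (forall b : R, y <= b%:E -> (L <= b)%R) -> L%:E <= y.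
Proof.
case: y => [y| |] Ly; [by rewrite lee_fin Ly | exact: leey |].
by exfalso; have := Ly (L - 1)%R (leNye _); lra.
Qed.

End ExtendedReals.

Section LowerSemicontinuity.
Context {R : realType} {X : topologicalType}.
Implicit Types (phi G : X -> \bar R).
Local Open Scope ereal_scope.

Lemma lsc_addr G (h : X -> R) : lower_semicontinuous G -> continuous h ->
  lower_semicontinuous (fun z => G z + (h z)%:E).
Proof.
move=> lG ch z a; rewrite -lte_subel_addr // => /lte_EFin_between[b /andP[ab bG]].
have [W WG GW] := lG z b bG.
have hz : \forall y \near z, (a - b < h y)%R.
  by apply: (cvgr_gt (h z) (ch z)); move: ab; rewrite lte_fin; lra.
exists (W `&` [set y | a - b < h y]%R); first exact: filterI.
move=> y [/GW bGy /= hy]; rewrite -lte_subel_addr //.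
by apply: lt_trans bGy; rewrite lte_fin; lra.
Qed.

Lemma lsc_attains_min phi (M : R) : lower_semicontinuous phi ->
  [set z | phi z <= M%:E] !=set0 -> compact [set z | phi z <= M%:E] ->
  exists p, forall z, phi p <= phi z.
Proof.
move=> lphi [z0 z0M] cK.
(* The sublevel sets [B a], [a <= M], form a filter base on the compact [B M];
   by lower semicontinuity, a cluster point lies in every [B a]. *)
pose B (a : R) := [set z | phi z <= a%:E].
pose D := [set a : R | (a <= M)%R /\ B a !=set0].
have DM : D M by split=> //; exists z0.
have FF : Filter (filter_from D B).
  apply: filter_from_filter; first by exists M.
  move=> a b [aM [za za_a]] [bM [zb zb_b]]; exists (Order.min a b).
    by split; [rewrite ge_min aM | case: (leP a b) => _; [exists za | exists zb]].
  by move=> w; rewrite /B /= EFin_min le_min => /andP[].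
have PF : ProperFilter (filter_from D B).
  by apply: filter_from_proper => // a [_ [za ?]]; exists za.
have /(cK _ PF)[p [_ clp]] : filter_from D B (B M) by exists M.
have pD a : D a -> phi p <= a%:E.
  move=> Da; rewrite leNgt; apply/negP => /lphi[W Wp aW].
  have Ba : filter_from D B (B a) by exists a.
  have [w [Bw Ww]] := clp _ _ Ba Wp.
  by have := aW w Ww; rewrite ltNge Bw.
exists p => z; apply: lee_of_EFin_lt => r rp; rewrite leNgt; apply/negP => zr.
have [rM|Mr] := leP r M.
  by have := pD r (conj rM (ex_intro _ z (ltW zr))); rewrite leNgt rp.
by have := pD M DM; rewrite leNgt (lt_trans _ rp) ?lte_fin.
Qed.

End LowerSemicontinuity.

Section InnerProduct.
Context {R : realType} {n : nat}.
Local Notation V := 'rV[R]_n.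
Implicit Types u w z : V.

Lemma dotpC u w : dotp u w = dotp w u.
Proof. by apply: eq_bigr => i _; rewrite mulrC. Qed.

Lemma dotpDl u w z : dotp (u + w) z = dotp u z + dotp w z.
Proof. by rewrite /dotp -big_split; apply: eq_bigr => i _; rewrite mxE mulrDl. Qed.

Lemma dotpDr u w z : dotp z (u + w) = dotp z u + dotp z w.
Proof. by rewrite dotpC dotpDl !(dotpC z). Qed.

Lemma dotpZl a u w : dotp (a *: u) w = a * dotp u w.
Proof. by rewrite /dotp mulr_sumr; apply: eq_bigr => i _; rewrite mxE mulrA. Qed.

Lemma dotpZr a u w : dotp w (a *: u) = a * dotp w u.
Proof. by rewrite dotpC dotpZl dotpC. Qed.

Lemma dotpNl u w : dotp (- u) w = - dotp u w.
Proof. by rewrite -scaleN1r dotpZl mulN1r. Qed.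

Lemma dotpNr u w : dotp w (- u) = - dotp w u.
Proof. by rewrite dotpC dotpNl dotpC. Qed.

Lemma dotp0r u : dotp u 0 = 0.
Proof. by rewrite -(scale0r 0) dotpZr mul0r. Qed.

Lemma sqnorm_ge0 u : 0 <= sqnorm u.
Proof. by apply: sumr_ge0 => i _; rewrite -expr2 sqr_ge0. Qed.

Lemma sqnorm_eq0 u : sqnorm u = 0 -> u = 0.
Proof.
move=> /eqP; rewrite psumr_eq0 => [/allP u0|i _]; last by rewrite -expr2 sqr_ge0.
apply/rowP => i; rewrite mxE; apply/eqP.
by rewrite -sqrf_eq0 expr2; exact: u0 (mem_index_enum i).
Qed.

Lemma sqnormN u : sqnorm (- u) = sqnorm u.
Proof. by rewrite /sqnorm dotpNl dotpNr opprK. Qed.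

Lemma sqnormB u w : sqnorm (u - w) = sqnorm (w - u).
Proof. by rewrite -sqnormN opprB. Qed.

Lemma sqnormD u w : sqnorm (u + w) = sqnorm u + 2 * dotp u w + sqnorm w.
Proof. rewrite /sqnorm !dotpDl !dotpDr (dotpC w u); ring. Qed.

Lemma sqnormZ a u : sqnorm (a *: u) = a ^+ 2 * sqnorm u.
Proof. by rewrite /sqnorm dotpZl dotpZr mulrA -expr2. Qed.

(* The norm of ['rV[R]_n] is the sup norm of the entries. *)
Lemma sqr_norm_le_sqnorm u : `|u| ^+ 2 <= sqnorm u.
Proof.
have [->|] := eqVneq `|u| 0; first by rewrite expr0n sqnorm_ge0.
rewrite [X in X != _]/Num.norm /= => /mx_norm_neq0 [[i j] /= uij].
rewrite [X in X ^+ 2 <= _]/Num.norm /= uij (ord1 i) real_normK ?num_real //.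
rewrite /sqnorm /dotp (bigD1 j) //= -expr2 lerDl.
by apply: sumr_ge0 => k _; rewrite -expr2 sqr_ge0.
Qed.

(* Young's inequality [2 <u, w> <= e |u|^2 + |w|^2 / e], in its triangle form. *)
Lemma sqnormD_le e u w : 0 < e ->
  sqnorm (u + w) <= (1 + e) * sqnorm u + (1 + e^-1) * sqnorm w.
Proof.
move=> e0; have h := sqnorm_ge0 (e *: u - w).
rewrite sqnormD sqnormN sqnormZ dotpNr dotpZl in h.
have young : 2 * dotp u w <= e * sqnorm u + e^-1 * sqnorm w.
  rewrite -(ler_pM2l e0) mulrDr !mulrA mulfV ?gt_eqF // mul1r -expr2; lra.
rewrite sqnormD; lra.
Qed.

Lemma continuous_sqnorm : continuous (@sqnorm R n).
Proof.
apply: (continuous_big (op := +%R)) => [|i _]; first exact: add_continuous.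
by move=> u; apply: continuousM; exact: coord_continuous.
Qed.

End InnerProduct.

Section Penalty.
Context {R : realType} {n : nat}.
Local Notation V := 'rV[R]_n.
Implicit Types (lam : R) (p w x y z : V).

Lemma qpenC lam x y : qpen lam x y = qpen lam y x.
Proof. by rewrite /qpen sqnormB. Qed.

Lemma continuous_qpen lam x : continuous (qpen lam x).
Proof.
move=> y; apply: (continuousM (s := fun y => sqnorm (y - x)) (t := fun=> _));
  last exact: cst_continuous.
apply: continuous_comp; last exact: continuous_sqnorm.
by apply: continuousB; [exact: cvg_id | exact: cst_continuous].
Qed.

Lemma qpen_dotp lam x y z : lam != 0 ->
  dotp (lam^-1 *: (z - x)) (y - x) - qpen lam x y = qpen lam z x - qpen lam z y.
Proof.
move=> lam0; rewrite /qpen -[y - z](subrKA x) (sqnormD (y - x)) dotpZl.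
by rewrite -(opprB x z) dotpNl (dotpC (x - z)); field.
Qed.

Lemma qpen_tilt lam p w z : lam != 0 ->
  dotp w (z - p) - qpen lam p z + qpen lam (p + lam *: w) z = lam / 2 * sqnorm w.
Proof.
move=> lam0; rewrite /qpen opprD addrA (sqnormD (z - p)) sqnormN sqnormZ.
by rewrite dotpNr dotpZr (dotpC (z - p)); field.
Qed.

Lemma qpen_cross lam x z p q : lam != 0 ->
  (qpen lam x p - qpen lam z p) - (qpen lam x q - qpen lam z q) =
  dotp (x - z) (q - p) / lam.
Proof.
move=> lam0; rewrite /qpen -[p - x](subrKA z) -[q - x](subrKA z).
rewrite (sqnormD (p - z)) (sqnormD (q - z)) -[q - p](subrKA z) -(opprB p z).
rewrite (dotpDr (q - z)) -(opprB x z) !dotpNr (dotpC (p - z)) (dotpC (q - z)).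
by field.
Qed.

End Penalty.

Section Envelope.
Context {R : realType} {n : nat}.
Local Notation V := 'rV[R]_n.
Implicit Types (lam c : R) (x y z : V) (f g : V -> \bar R).
Local Open Scope ereal_scope.

Lemma menv_le lam f x y : menv lam f x <= f y + (qpen lam x y)%:E.
Proof. by apply: ereal_inf_lbound; exists y. Qed.

Lemma menv_ge lam f x a :
  (forall y, a <= f y + (qpen lam x y)%:E) -> a <= menv lam f x.
Proof. by move=> fa; apply: le_ereal_inf_tmp => _ [y _ <-]. Qed.

Lemma le_menv lam f g x : (forall y, f y <= g y) -> menv lam f x <= menv lam g x.
Proof.
move=> fg; apply: menv_ge => y; apply: le_trans (menv_le _ _ _ y) _.
exact: leeD2r.
Qed.

Lemma menvDr lam f c x :
  menv lam (fun y => f y + c%:E) x = menv lam f x + c%:E.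
Proof.
apply/eqP; rewrite eq_le; apply/andP; split.
  rewrite -leeBlDr //; apply: menv_ge => y; rewrite leeBlDr // addeAC.
  exact: (menv_le _ (fun y => f y + c%:E)).
by apply: menv_ge => y; rewrite addeAC leeD2rE //; exact: menv_le.
Qed.

Lemma hfun_ge lam f x y : menv lam f y - (qpen lam x y)%:E <= hfun lam f x.
Proof.
by rewrite /hfun leeNr fin_num_oppeB //; exact: (menv_le _ (fun y => - menv lam f y)).
Qed.

Lemma hfun_le lam f x : hfun lam f x <= f x.
Proof.
rewrite /hfun leeNl; apply: menv_ge => y; rewrite -leeBlDr // -fin_num_oppeD //.
by rewrite leeN2 qpenC; exact: menv_le.
Qed.

Lemma menv_hfun lam f : menv lam (hfun lam f) = menv lam f.
Proof.
apply/funext => x; apply/eqP; rewrite eq_le; apply/andP; split.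
  by apply: le_menv => y; exact: hfun_le.
apply: menv_ge => y; rewrite -leeBlDr // qpenC; exact: hfun_ge.
Qed.

Lemma hfunDr lam f c x :
  hfun lam (fun y => f y + c%:E) x = hfun lam f x + c%:E.
Proof.
rewrite /hfun; have -> : (fun y => - menv lam (fun z => f z + c%:E) y) =
          (fun y => - menv lam f y + (- c)%:E).
  by apply/funext => y; rewrite menvDr fin_num_oppeD.
by rewrite menvDr fin_num_oppeD // EFinN oppeK.
Qed.

Lemma hfun_shift_of_menv_shift lam f1 f2 c :
  (forall x, menv lam f1 x = menv lam f2 x + c%:E) ->
  forall x, hfun lam f1 x = hfun lam f2 x + c%:E.
Proof.
move=> f12 x; rewrite -hfunDr /hfun.
by congr (- menv _ _ _); apply/funext => y; rewrite f12 menvDr.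
Qed.

Lemma menv_shift_of_hfun_shift lam f1 f2 c :
  (forall x, hfun lam f1 x = hfun lam f2 x + c%:E) ->
  forall x, menv lam f1 x = menv lam f2 x + c%:E.
Proof.
move=> f12 x; rewrite -(menv_hfun lam f1) -(menv_hfun lam f2) -menvDr.
by congr (menv _ _ _); apply/funext.
Qed.

End Envelope.

Section ProxSubdifferential.
Context {R : realType} {n : nat}.
Local Notation V := 'rV[R]_n.
Implicit Types (lam : R) (v x y z : V) (f : V -> \bar R).
Local Open Scope ereal_scope.

Lemma prox_psubdiff lam f z x : (0 < lam)%R -> (forall y, f y != -oo) ->
  prox lam f z x <-> psubdiff lam f x (lam^-1 *: (z - x)).
Proof.
move=> lam_gt0 fN; have lam0 : lam != 0%R by rewrite gt_eqF.
have subgradE y : (f x + (dotp (lam^-1 *: (z - x)) (y - x) - qpen lam x y)%:E <= f y)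
    = (f x + (qpen lam z x)%:E <= f y + (qpen lam z y)%:E).
  by rewrite qpen_dotp // EFinB addeA leeBlDr.
split=> [[fxz fz_fin]|[fx_fin fxz]].
  split=> [|y]; last by rewrite subgradE fxz; exact: menv_le.
  by rewrite ltey; apply: contra fz_fin => /eqP fx; rewrite -fxz fx.
have fxzE : f x + (qpen lam z x)%:E = menv lam f z.
  apply/eqP; rewrite eq_le menv_le andbT; apply: menv_ge => y.
  by rewrite -subgradE; exact: fxz.
split=> //; rewrite -fxzE; move: (fN x) fx_fin.
by case: (f x).
Qed.

Lemma psubdiff_prox lam f x v : (0 < lam)%R -> (forall y, f y != -oo) ->
  psubdiff lam f x v <-> prox lam f (x + lam *: v) x.
Proof.
move=> lam_gt0 fN; rewrite prox_psubdiff // addrC addKr scalerA.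
by rewrite mulVf ?gt_eqF // scale1r.
Qed.

Lemma psubdiff_eq_iff_prox_eq lam f1 f2 : (0 < lam)%R ->
  (forall y, f1 y != -oo) -> (forall y, f2 y != -oo) ->
  (forall x, psubdiff lam f1 x = psubdiff lam f2 x) <->
  (forall x, prox lam f1 x = prox lam f2 x).
Proof.
move=> lam_gt0 f1N f2N.
have P1 z x := prox_psubdiff z x lam_gt0 f1N.
have P2 z x := prox_psubdiff z x lam_gt0 f2N.
have S1 x v := psubdiff_prox x v lam_gt0 f1N.
have S2 x v := psubdiff_prox x v lam_gt0 f2N.
split=> f12 x; apply/seteqP; split=> v /=.
- by move=> /P1; rewrite f12 => /P2.
- by move=> /P2; rewrite -f12 => /P1.
- by move=> /S1; rewrite f12 => /S2.
- by move=> /S2; rewrite -f12 => /S1.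
Qed.

End ProxSubdifferential.

Section QuadraticMinorants.
Context {R : realType} {n : nat}.
Local Notation V := 'rV[R]_n.
Implicit Types (x z : V) (f G phi : V -> \bar R).
Local Open Scope ereal_scope.

Definition quad_minorized (eta : R) (x0 : V) f :=
  exists A : R, forall z, (A - eta * sqnorm (z - x0))%:E <= f z.

Lemma quad_minorized_shift eta eta' x0 x f : (0 < eta)%R -> (eta < eta')%R ->
  quad_minorized eta x0 f -> quad_minorized eta' x f.
Proof.
move=> eta0 eta_lt [A fA]; pose e := (eta' / eta - 1)%R.
have e0 : (0 < e)%R by rewrite subr_gt0 ltr_pdivlMr // mul1r.
have etaE : (eta * (1 + e) = eta')%R by rewrite addrC subrK mulrC mulfVK ?gt_eqF.
exists (A - eta * (1 + e^-1) * sqnorm (x - x0))%R => z.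
apply: le_trans (fA z); rewrite lee_fin -[(z - x0)%R](subrKA x).
have := ler_wpM2l (ltW eta0) (sqnormD_le (z - x)%R (x - x0)%R e0).
by rewrite mulrDr !mulrA etaE; lra.
Qed.

Lemma compact_sublevel_quad phi x (A k M : R) : (0 < k)%R ->
  lower_semicontinuous phi -> (forall z, (A + k * sqnorm (z - x))%:E <= phi z) ->
  compact [set z | phi z <= M%:E].
Proof.
move=> k0 lphi phiA; apply: bounded_closed_compact.
  exists (`|x| + (1 + (M - A) / k))%R; split; first exact: num_real.
  move=> r r_gt z /= phizM; apply: le_trans (ltW r_gt).
  have zx_le : (sqnorm (z - x) <= (M - A) / k)%R.
    rewrite ler_pdivlMr // mulrC; move: (le_trans (phiA z) phizM).
    by rewrite lee_fin; lra.
  have := sqr_norm_le_sqnorm (z - x)%R; have := sqr_ge0 (`|z - x| - 1)%R.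
  have := ler_normD x (z - x)%R; rewrite addrC subrK.
  nra.
rewrite (_ : [set z | _] = ~` [set z | M%:E < phi z]); last first.
  by apply/seteqP; split=> z /=; rewrite leNgt => /negP.
by apply: open_closedC; exact: (proj1 (lower_semicontinuousP phi) lphi M).
Qed.

Lemma exists_prox G x (mu eta : R) : (0 < mu)%R -> (eta < (2 * mu)^-1)%R ->
  lower_semicontinuous G -> (exists z, G z < +oo) -> quad_minorized eta x G ->
  exists p, prox mu G x p.
Proof.
move=> mu0 eta_lt lG [z1 Gz1] [A GA].
pose phi z := G z + (qpen mu x z)%:E.
have phiA z : (A + ((2 * mu)^-1 - eta) * sqnorm (z - x))%:E <= phi z.
  apply: le_trans (leeD2r (qpen mu x z)%:E (GA z)).
  by rewrite -EFinD lee_fin /qpen; lra.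
have phiz1 : phi z1 \is a fin_num.
  rewrite fin_numE -ltNye -ltey (lt_le_trans (ltNyr _) (phiA z1)) /=.
  by rewrite lte_add_pinfty ?ltry.
have lphi : lower_semicontinuous phi := lsc_addr lG (@continuous_qpen _ _ mu x).
have [p p_min] : exists p, forall z, phi p <= phi z.
  apply: (@lsc_attains_min _ _ phi (fine (phi z1))) => //.
    by exists z1; rewrite /= fineK.
  by apply: (compact_sublevel_quad _ lphi phiA); rewrite subr_gt0.
exists p; split; first by apply/eqP; rewrite eq_le menv_le andbT; exact: menv_ge.
rewrite -ltey; apply: le_lt_trans (menv_le mu G x z1) _.
by move: phiz1; rewrite fin_numE ltey => /andP[].
Qed.

End QuadraticMinorants.

Section ProxExistence.
Context {R : realType} {n : nat}.
Local Notation V := 'rV[R]_n.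
Implicit Types (lam eta : R) (x z : V) (f : V -> \bar R).
Local Open Scope ereal_scope.

Lemma quad_minorized_of_threshold lam f : (0 < lam)%R -> proper_fun f ->
  lam%:E < prox_threshold f ->
  exists2 eta, (0 < eta < (2 * lam)^-1)%R & exists x0, quad_minorized eta x0 f.
Proof.
move=> lam0 [fN [x1 fx1]] /ereal_sup_gt[_ [l [l0 [x0 menv_gt]] <-]].
rewrite lte_fin => lam_lt; exists ((2 * l)^-1)%R.
  by rewrite invr_gt0 ltf_pV2 ?posrE ?mulr_gt0 //; lra.
have menv_fin : menv l f x0 \is a fin_num.
  rewrite fin_numE -ltNye menv_gt -ltey /=.
  by apply: le_lt_trans (menv_le l f x0 x1) _; rewrite lte_add_pinfty ?ltry.
exists x0, (fine (menv l f x0)) => z.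
by rewrite mulrC EFinB fineK // leeBlDr //; exact: menv_le.
Qed.

Lemma prox_nonempty lam eta x0 f x : (0 < lam)%R -> lower_semicontinuous f ->
  proper_fun f -> (0 < eta < (2 * lam)^-1)%R -> quad_minorized eta x0 f ->
  exists p, prox lam f x p.
Proof.
move=> lam0 lf [_ [x1 fx1]] /andP[eta0 eta_lt] fquad.
pose eta' := ((eta + (2 * lam)^-1) / 2)%R.
have eta'_lt : (eta' < (2 * lam)^-1)%R by rewrite /eta'; lra.
have x_quad : quad_minorized eta' x f.
  by apply: (quad_minorized_shift x eta0 _ fquad); rewrite /eta'; lra.
exact: exists_prox lam0 eta'_lt lf (ex_intro _ x1 fx1) x_quad.
Qed.

End ProxExistence.

Section ConstantDifference.
Context {R : realType} {n : nat}.
Local Notation V := 'rV[R]_n.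
Implicit Types (lam : R) (p x z : V) (f : V -> \bar R).

Lemma const_of_dotp_bound (d : V -> R) (P : V -> V) (K : R) :
  (forall x z, `|d x - d z| <= K * dotp (x - z) (P x - P z)) ->
  forall a b, d b = d a.
Proof.
move=> dP a b; apply/eqP; rewrite -subr_eq0; apply/eqP.
apply: (@eq0_of_le_div_nat _ _ (K * dotp (b - a) (P b - P a))) => N N0.
(* Along the subdivision of [a, b] into [N] steps the bounds telescope. *)
pose e := N%:R^-1 *: (b - a); pose xk k : V := a + k%:R *: e.
have chain k : `|d (xk k) - d a| <= K * dotp e (P (xk k) - P a).
  elim: k => [|k IH]; first by rewrite /xk scale0r addr0 !subrr normr0 dotp0r mulr0.
  have stepE : xk k.+1 - xk k = e by apply/rowP => i; rewrite !mxE mulrS; ring.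
  rewrite -[d _ - d a](subrKA (d (xk k))) -[P _ - P a](subrKA (P (xk k))).
  apply: le_trans (ler_normD _ _) _; rewrite dotpDr mulrDr lerD //.
  by rewrite -stepE; exact: dP.
have xkN : xk N = b.
  by rewrite /xk /e scalerA mulfV ?pnatr_eq0 -?lt0n // scale1r addrC subrK.
by have := chain N; rewrite xkN /e dotpZl mulrCA mulrC.
Qed.

Local Open Scope ereal_scope.

Lemma menv_le_prox lam f x z p : prox lam f z p ->
  menv lam f x <= menv lam f z + (qpen lam x p - qpen lam z p)%:E.
Proof.
move=> [<- _]; rewrite -addeA -EFinD subrKC; exact: menv_le.
Qed.

Lemma menv_fin_of_prox lam f z p : (forall y, f y != -oo) -> prox lam f z p ->
  menv lam f z \is a fin_num.
Proof.
move=> fN [fpE menv_fin]; rewrite fin_numE menv_fin andbT -fpE.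
by rewrite adde_eq_ninfty negb_or fN.
Qed.

Lemma menv_shift_of_prox_eq lam f1 f2 : (0 < lam)%R ->
  (forall y, f1 y != -oo) -> (forall y, f2 y != -oo) ->
  (forall x, exists p, prox lam f1 x p) ->
  (forall x, prox lam f1 x = prox lam f2 x) ->
  exists c : R, forall x, menv lam f1 x = menv lam f2 x + c%:E.
Proof.
move=> lam0 f1N f2N f1P f12; have [P P1] := choice f1P.
have P2 x : prox lam f2 x (P x) by rewrite -f12.
have fin1 x := menv_fin_of_prox f1N (P1 x); have fin2 x := menv_fin_of_prox f2N (P2 x).
have fine_menv_le f : (forall y, f y != -oo) -> (forall x, prox lam f x (P x)) ->
    forall x z, (fine (menv lam f x) - fine (menv lam f z) <=
                 qpen lam x (P z) - qpen lam z (P z))%R.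
  move=> fN fP x z; have := menv_le_prox x (fP z).
  rewrite -(fineK (menv_fin_of_prox fN (fP x))) -(fineK (menv_fin_of_prox fN (fP z))).
  by rewrite -EFinD lee_fin; lra.
(* The increments [e x - e z] of both envelopes lie in an interval of length
   [<x - z, P x - P z> / lam]. *)
pose d x := (fine (menv lam f1 x) - fine (menv lam f2 x))%R.
have d_bound x z : (`|d x - d z| <= lam^-1 * dotp (x - z) (P x - P z))%R.
  have := qpen_cross x z (P z) (P x) (lt0r_neq0 lam0); rewrite mulrC => <-.
  have := fine_menv_le f1 f1N P1 x z; have := fine_menv_le f1 f1N P1 z x.
  have := fine_menv_le f2 f2N P2 x z; have := fine_menv_le f2 f2N P2 z x.
  by rewrite ler_norml /d; lra.
exists (d 0%R) => x; rewrite -(const_of_dotp_bound d_bound (0 : V) x) /d EFinB.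
by rewrite !fineK ?fin1 ?fin2 // (addeC (menv lam f2 x)) subeK ?fin2.
Qed.

End ConstantDifference.

Section HfunLowerBounds.
Context {R : realType} {n : nat}.
Local Notation V := 'rV[R]_n.
Implicit Types (lam mu : R) (p v w x z : V) (f : V -> \bar R).
Local Open Scope ereal_scope.

Lemma hfun_ge_tilted lam f (a : R) p w x : (0 < lam)%R ->
  (forall z, (a + dotp w (z - p) - qpen lam p z)%:E <= f z) ->
  (a + lam / 2 * sqnorm w - qpen lam x (p + lam *: w))%:E <= hfun lam f x.
Proof.
move=> lam0 f_ge; apply: le_trans (hfun_ge lam f x (p + lam *: w)).
rewrite EFinB; apply: leeD2r; apply: menv_ge => z.
apply: le_trans (leeD2r _ (f_ge z)); rewrite -EFinD lee_fin.
by have := qpen_tilt p w z (lt0r_neq0 lam0); lra.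
Qed.

Lemma hfun_ge_affine lam mu f (a : R) p v : (0 < mu <= lam)%R ->
  (forall z, (a + dotp v (z - p))%:E <= f z) ->
  (a + mu / 2 * sqnorm v)%:E <= hfun lam f (p + mu *: v).
Proof.
move=> /andP[mu0 mu_le] f_ge; have lam0 : (0 < lam)%R by apply: lt_le_trans mu_le.
apply: le_trans (hfun_ge_tilted (a := a) (p := p) (w := v) _ lam0 _) => [|z].
  rewrite /qpen; have -> : (p + lam *: v - (p + mu *: v) = (lam - mu) *: v)%R.
    by rewrite opprD addrACA subrr add0r scalerBl.
  rewrite sqnormZ lee_fin -subr_ge0.
  have -> : (a + lam / 2 * sqnorm v - (lam - mu) ^+ 2 * sqnorm v / (2 * lam) -
      (a + mu / 2 * sqnorm v) = sqnorm v * mu * (lam - mu) / (2 * lam))%R.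
    by field; rewrite gt_eqF.
  by rewrite !mulr_ge0 ?sqnorm_ge0 ?subr_ge0 ?invr_ge0 ?mulr_ge0 // ltW.
apply: le_trans (f_ge z); rewrite lee_fin lerBlDr lerDl.
by rewrite divr_ge0 ?sqnorm_ge0 // mulr_ge0 // ltW.
Qed.

Lemma hfun_halfspace_pinfty lam eta f p v : (0 < lam)%R ->
  (eta <= (2 * lam)^-1)%R -> quad_minorized eta p f ->
  (forall z, f z < +oo -> (dotp v (z - p) <= 0)%R) -> (v != 0)%R ->
  hfun lam f (p + v) = +oo.
Proof.
move=> lam0 eta_le [A fA] dom_half v0.
have s0 : (0 < sqnorm v)%R.
  by rewrite lt_neqAle sqnorm_ge0 andbT eq_sym; apply: contra v0 => /eqP/sqnorm_eq0 ->.
apply/eqP; rewrite eq_le leey /=; apply: lee_of_EFin_lt => r _.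
pose t := (`|r - A| * (2 * lam) / sqnorm v + 1)%R.
have t1 : (1 <= t)%R by rewrite lerDr !mulr_ge0 ?invr_ge0 ?sqnorm_ge0 // ltW.
apply: le_trans (hfun_ge_tilted (a := A) (p := p) (w := (t / lam) *: v) _ lam0 _)
  => [|z].
  have -> : (lam *: ((t / lam) *: v) = t *: v)%R.
    by rewrite scalerA mulrCA mulfV ?gt_eqF // mulr1.
  rewrite /qpen; have -> : (p + t *: v - (p + v) = (t - 1) *: v)%R.
    by rewrite opprD addrACA subrr add0r scalerBl scale1r.
  rewrite !sqnormZ lee_fin.
  have -> : (A + lam / 2 * ((t / lam) ^+ 2 * sqnorm v) -
      (t - 1) ^+ 2 * sqnorm v / (2 * lam) =
      A + 2 * `|r - A| + sqnorm v / (2 * lam))%R.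
    by rewrite /t; field; rewrite gt_eqF // gt_eqF.
  have := ler_norm (r - A)%R; have : (0 <= sqnorm v / (2 * lam))%R.
    by rewrite divr_ge0 ?sqnorm_ge0 // mulr_ge0 // ltW.
  by have := normr_ge0 (r - A)%R; lra.
have [->|fz_fin] := eqVneq (f z) +oo; first exact: leey.
have vz_le : (dotp v (z - p) <= 0)%R by apply: dom_half; rewrite ltey.
apply: le_trans (fA z); rewrite lee_fin dotpZl /qpen.
have : (t / lam * dotp v (z - p) <= 0)%R.
  by rewrite mulr_ge0_le0 // divr_ge0 // ltW // (lt_le_trans ltr01).
have : (eta * sqnorm (z - p) <= (2 * lam)^-1 * sqnorm (z - p))%R.
  by rewrite ler_wpM2r ?sqnorm_ge0.
by lra.
Qed.

End HfunLowerBounds.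

Section ConvexMinorants.
Context {R : realType} {n : nat}.
Local Notation V := 'rV[R]_n.
Implicit Types (lam mu eta : R) (p v x z : V) (g G : V -> \bar R).
Local Open Scope ereal_scope.

Lemma convex_psubdiff_affine mu G p v : (0 < mu)%R -> convex_efun G ->
  (forall z, G z != -oo) -> psubdiff mu G p v ->
  forall z, G p + (dotp v (z - p))%:E <= G z.
Proof.
move=> mu0 cG GN [Gp_lt Gp_ge] z.
have Gp_fin : G p \is a fin_num by rewrite fin_numE GN -ltey Gp_lt.
have [->|Gz_oo] := eqVneq (G z) +oo; first exact: leey.
have Gz_fin : G z \is a fin_num by rewrite fin_numE GN.
move: Gp_ge; rewrite -(fineK Gp_fin) -(fineK Gz_fin) -EFinD lee_fin.
set gp := fine (G p); set gz := fine (G z) => Gp_ge.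
suff : (dotp v (z - p) - (gz - gp) <= 0)%R by lra.
apply: (le0_of_le_mul_small (S := qpen mu p z)) => [|t /andP[t0 t1]].
  by rewrite divr_ge0 ?sqnorm_ge0 // mulr_ge0 // ltW.
pose w := ((1 - t) *: p + t *: z)%R.
have wpE : (w - p = t *: (z - p))%R by apply/rowP => i; rewrite !mxE; ring.
have Gw : G w <= ((1 - t) * gp + t * gz)%:E.
  by apply: cG; rewrite /gp /gz ?fineK // (ltW t0) t1.
have := le_trans (Gp_ge w) Gw; rewrite -EFinD lee_fin /qpen wpE dotpZr sqnormZ => Gw_le.
by rewrite -(ler_pM2l t0); lra.
Qed.

Lemma convex_lsc_linear_minorant g x1 : convex_efun g ->
  lower_semicontinuous g -> g x1 \is a fin_num ->
  exists c A : R, forall z, (A - c * `|z - x1|)%:E <= g z.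
Proof.
move=> cg lg g1_fin; pose g1 := fine (g x1).
have g1E : g x1 = g1%:E by rewrite /g1 fineK.
have [W /nbhs_ballP[d /= d_gt0 dW] Wg] :
    exists2 W, nbhs x1 W & forall w, W w -> (g1 - 1)%:E < g w.
  by apply: lg; rewrite g1E lte_fin; lra.
have near_x1 w : (`|x1 - w| < d)%R -> (g1 - 1)%:E < g w.
  by move=> x1w; apply/Wg/dW; rewrite -ball_normE.
exists (2 / d)%R, (g1 - 1)%R => z; apply: EFin_le_of_ub => b gzb.
set m := `|z - x1|%R.
have [m_lt|m_ge] := ltP m d.
  have gz_gt : (g1 - 1)%:E < g z by apply: near_x1; rewrite distrC.
  have : (0 <= 2 / d * m)%R.
    by apply: mulr_ge0; [apply: divr_ge0 => //; exact: ltW | exact: normr_ge0].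
  by have := lt_le_trans gz_gt gzb; rewrite lte_fin; lra.
have m0 : (0 < m)%R by apply: lt_le_trans m_ge.
pose t := (d / (2 * m))%R.
have t0 : (0 < t)%R by rewrite divr_gt0 // mulr_gt0.
have t1 : (t <= 1)%R by rewrite ler_pdivrMr ?mulr_gt0 // mul1r; lra.
have x1wE : (x1 - ((1 - t) *: x1 + t *: z) = t *: (x1 - z))%R.
  by apply/rowP => i; rewrite !mxE; ring.
have tm : (t * m = d / 2)%R by rewrite /t; field; rewrite gt_eqF.
have w_near : (`|x1 - ((1 - t) *: x1 + t *: z)| < d)%R.
  by rewrite x1wE normrZ gtr0_norm // distrC -/m tm; lra.
have := lt_le_trans (near_x1 _ w_near) (cg x1 z g1 b t _ gzb _).
rewrite g1E lte_fin (ltW t0) t1 => /(_ (lexx _) isT) gw.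
have ctm : (2 / d * m * t = 1)%R by rewrite /t; field; rewrite !gt_eqF.
rewrite leNgt; apply/negP => b_lt.
by have := ltr_pM2l t0 b (g1 - 1 - 2 / d * m)%R; rewrite b_lt; lra.
Qed.

Lemma quad_minorized_of_convex eta g x1 : (0 < eta)%R -> convex_efun g ->
  lower_semicontinuous g -> g x1 \is a fin_num -> quad_minorized eta x1 g.
Proof.
move=> eta0 cg lg g1_fin; have [c [A gA]] := convex_lsc_linear_minorant cg lg g1_fin.
exists (A - c ^+ 2 / (4 * eta))%R => z; apply: le_trans (gA z); rewrite lee_fin.
set m := `|z - x1|%R.
have cm_le : (c * m <= eta * m ^+ 2 + c ^+ 2 / (4 * eta))%R.
  rewrite -(ler_pM2l (_ : 0 < 4 * eta)%R); last by rewrite mulr_gt0.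
  have -> : (4 * eta * (eta * m ^+ 2 + c ^+ 2 / (4 * eta)) =
      4 * eta ^+ 2 * m ^+ 2 + c ^+ 2)%R by field; rewrite gt_eqF.
  by have := sqr_ge0 (2 * eta * m - c)%R; nra.
by have := ler_wpM2l (ltW eta0) (sqr_norm_le_sqnorm (z - x1)%R); rewrite -/m; lra.
Qed.

Lemma convex_efun_max0 g : convex_efun g -> convex_efun (fun z => Order.max (g z) 0).
Proof.
move=> cg x y a b t; rewrite !ge_max => /andP[ga a0] /andP[gb b0] t01.
rewrite cg //= lee_fin; move: a0 b0 t01; rewrite !lee_fin => a0 b0 /andP[t0 t1].
by rewrite addr_ge0 // mulr_ge0 // subr_ge0.
Qed.

Lemma lsc_max0 g : lower_semicontinuous g ->
  lower_semicontinuous (fun z => Order.max (g z) 0).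
Proof.
move=> lg x a; rewrite lt_max => /orP[/lg[W Wx aW]|a0].
  by exists W => // y /aW ay; rewrite lt_max ay.
by exists setT => [|y _]; [exact: filterT | rewrite lt_max a0 orbT].
Qed.

Lemma menv_ge_of_lsc lam eta g x (r : R) : (0 < lam)%R ->
  lower_semicontinuous g -> quad_minorized eta x g -> r%:E < g x ->
  exists mu, [/\ (0 < mu <= lam)%R, (eta < (2 * mu)^-1)%R & r%:E <= menv mu g x].
Proof.
move=> lam0 lg [A gA] /lg[W /nbhs_ballP[d d_gt0 dW] Wg].
pose K := ((2 * lam)^-1 + `|eta| + 1 + `|r - A| / d ^+ 2)%R.
have rA0 : (0 <= `|r - A| / d ^+ 2)%R by rewrite divr_ge0 ?sqr_ge0.
have lam20 : (0 < (2 * lam)^-1)%R by rewrite invr_gt0 mulr_gt0.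
have K0 : (0 < K)%R by have := normr_ge0 eta; rewrite /K; lra.
have muE : ((2 * (2 * K)^-1)^-1 = K)%R by field; rewrite gt_eqF.
exists (2 * K)^-1%R; split; rewrite ?muE.
- rewrite invr_gt0 mulr_gt0 //= -[leRHS]invrK lef_pV2 ?posrE ?invr_gt0 ?mulr_gt0 //.
  have -> : (lam^-1 = 2 * (2 * lam)^-1)%R by field; rewrite gt_eqF.
  by have := normr_ge0 eta; rewrite /K; lra.
- by have := ler_norm eta; rewrite /K; lra.
apply: menv_ge => z; rewrite /qpen muE.
have [zx_lt|zx_ge] := ltP (sqnorm (z - x)) (d ^+ 2)%R.
  apply: le_trans (leeDl _ _); last by rewrite lee_fin mulr_ge0 ?sqnorm_ge0 ?ltW.
  have d_ge0 : (0 <= d)%R := ltW d_gt0.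
  apply/ltW/Wg/dW; rewrite -ball_normE /= -(@ltr_pXn2r _ 2) ?nnegrE ?normr_ge0 //.
  by apply: le_lt_trans (sqr_norm_le_sqnorm _) _; rewrite sqnormB.
apply: le_trans (leeD2r (sqnorm (z - x) * K)%:E (gA z)); rewrite -EFinD lee_fin.
have Keta : (`|r - A| / d ^+ 2 + 1 <= K - eta)%R.
  by have := ler_norm eta; rewrite /K; lra.
have Keta0 : (0 <= K - eta)%R by have := ler_norm eta; rewrite /K; lra.
have := ler_wpM2l Keta0 zx_ge.
have := ler_wpM2r (sqr_ge0 d) Keta.
have -> : ((`|r - A| / d ^+ 2 + 1) * d ^+ 2 = `|r - A| + d ^+ 2)%R.
  by field; rewrite gt_eqF.
by have := ler_norm (r - A)%R; have := sqr_ge0 d; lra.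
Qed.

End ConvexMinorants.

Section ConvexMinorantsOfHfun.
Context {R : realType} {n : nat}.
Local Notation V := 'rV[R]_n.
Implicit Types (lam eta : R) (p x z : V) (f g : V -> \bar R).
Local Open Scope ereal_scope.

Lemma le_hfun_of_convex_minorant_fin lam f g x x1 (r : R) : (0 < lam)%R ->
  convex_efun g -> lower_semicontinuous g -> (forall z, g z <= f z) ->
  g x1 \is a fin_num -> r%:E < g x -> r%:E <= hfun lam f x.
Proof.
move=> lam0 cg lg gf g1_fin rgx.
have gquad : quad_minorized 2 x g.
  apply: (quad_minorized_shift x ltr01); first by rewrite ltr1n.
  exact: quad_minorized_of_convex ltr01 cg lg g1_fin.
have gN z : g z != -oo.
  by case: gquad => A gA; rewrite -ltNye (lt_le_trans (ltNyr _) (gA z)).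
(* For a proximal point [p] of [g] at [x] with a small parameter [mu], convexity
   turns the proximal subgradient [(x - p) / mu] into an affine minorant of [g]
   whose lift through [h_lam f] reaches [e_mu g x >= r] at [x]. *)
have [mu [/andP[mu0 mu_le] eta_lt r_le]] := menv_ge_of_lsc lam0 lg gquad rgx.
have g1_lt : g x1 < +oo by move: g1_fin; rewrite fin_numElt => /andP[].
have [p xp] := exists_prox mu0 eta_lt lg (ex_intro _ x1 g1_lt) gquad.
have g_aff := convex_psubdiff_affine mu0 cg gN (proj1 (prox_psubdiff x p mu0 gN) xp).
have [gp_menv menv_fin] := xp.
have gp_fin : g p \is a fin_num.
  by rewrite fin_numE gN; apply: contra menv_fin => /eqP gp; rewrite -gp_menv gp.
pose v := (mu^-1 *: (x - p))%R.
have xE : x = (p + mu *: v)%R by rewrite scalerA mulfV ?gt_eqF // scale1r addrC subrK.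
have qE : qpen mu x p = (mu / 2 * sqnorm v)%R.
  rewrite /qpen {1}xE opprD addrA subrr add0r sqnormN sqnormZ.
  by field; rewrite gt_eqF.
apply: (le_trans r_le); rewrite -gp_menv qE -(fineK gp_fin) -EFinD xE.
apply: hfun_ge_affine => [|z]; first by rewrite mu0 mu_le.
by rewrite EFinD fineK //; apply: le_trans (g_aff z) (gf z).
Qed.

Lemma hfun_pinfty_of_convex_minorant_inf lam eta x0 f g x : (0 < lam)%R ->
  (0 < eta < (2 * lam)^-1)%R -> quad_minorized eta x0 f -> proper_fun f ->
  convex_efun g -> lower_semicontinuous g -> (forall z, g z <= f z) ->
  (forall z, g z \isn't a fin_num) -> g x = +oo -> hfun lam f x = +oo.
Proof.
move=> lam0 /andP[eta0 eta_lt] fquad [_ [xf fxf]] cg lg gf g_inf gx.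
have g_dom z : f z < +oo -> g z = -oo.
  move=> fz; move: (g_inf z); rewrite fin_numEn => /orP[/eqP //|/eqP gz].
  by have := le_lt_trans (gf z) fz; rewrite gz ltxx.
(* The proximal point [p] of [max g 0] at [x] is the projection of [x] onto
   the closed convex set [[g = -oo]], which contains [dom f]. *)
pose G z := Order.max (g z) 0.
have G_ge0 z : 0 <= G z by rewrite le_max lexx orbT.
have GN z : G z != -oo by rewrite -ltNye (lt_le_trans (ltNyr 0%R) (G_ge0 z)).
have Gquad : quad_minorized 0 x G by exists 0%R => z; rewrite mul0r subr0.
have Gxf : G xf < +oo by rewrite /G g_dom // max_r ?leNye.
have half_gt0 : (0 < (2 * 1)^-1 :> R)%R by rewrite invr_gt0 mulr_gt0.
have [p xp] := exists_prox ltr01 half_gt0 (lsc_max0 lg) (ex_intro _ xf Gxf) Gquad.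
have G_aff z : G p + (dotp (x - p) (z - p))%:E <= G z.
  have := convex_psubdiff_affine ltr01 (convex_efun_max0 cg) GN
    (proj1 (prox_psubdiff x p ltr01 GN) xp) z.
  by rewrite invr1 scale1r.
have Gp0 : G p = 0.
  have [Gp_menv menv_fin] := xp; move: (g_inf p); rewrite fin_numEn.
  case/orP=> /eqP gp; first by rewrite /G gp max_r ?leNye.
  by move: menv_fin; rewrite -Gp_menv /G gp max_l ?leey.
rewrite -(subrK p x) addrC.
apply: (hfun_halfspace_pinfty lam0 (lexx _)) => [|z fz|].
- exact: (quad_minorized_shift p eta0 eta_lt fquad).
- by have := G_aff z; rewrite Gp0 /G g_dom // max_r ?leNye // add0e lee_fin.
- rewrite subr_eq0; apply/negP => /eqP xpE.
  by move: Gp0; rewrite -xpE /G gx max_l ?leey.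
Qed.

Lemma convex_minorant_le_hfun lam eta x0 f g : (0 < lam)%R ->
  (0 < eta < (2 * lam)^-1)%R -> quad_minorized eta x0 f -> proper_fun f ->
  convex_efun g -> lower_semicontinuous g -> (forall z, g z <= f z) ->
  forall x, g x <= hfun lam f x.
Proof.
move=> lam0 eta01 fquad pf cg lg gf x; apply: lee_of_EFin_lt => r rgx.
have [[x1 g1_fin]|g_inf] := pselect (exists x1, g x1 \is a fin_num).
  exact: le_hfun_of_convex_minorant_fin lam0 cg lg gf g1_fin rgx.
have g_inf' z : g z \isn't a fin_num by apply/negP => gz; apply: g_inf; exists z.
have gx : g x = +oo.
  move: (g_inf' x) rgx; rewrite fin_numEn => /orP[/eqP ->|/eqP //].
  by rewrite ltNge leNye.
by rewrite (hfun_pinfty_of_convex_minorant_inf lam0 eta01 fquad pf cg lg gf g_inf' gx)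
  leey.
Qed.

End ConvexMinorantsOfHfun.

Section ClosedConvexHull.
Context {R : realType} {n : nat}.
Local Notation V := 'rV[R]_n.
Implicit Types (lam eta : R) (x z : V) (f g : V -> \bar R).
Local Open Scope ereal_scope.

Lemma convex_efunBr g (c : R) : convex_efun g -> convex_efun (fun z => g z - c%:E).
Proof.
move=> cg x y a b t; rewrite !leeBlDr // -!EFinD => gxa gyb t01.
by apply: le_trans (cg x y _ _ t gxa gyb t01) _; rewrite lee_fin; lra.
Qed.

Lemma cconvhull_le_of_hfun_shift lam eta x0 f1 f2 (c : R) : (0 < lam)%R ->
  (0 < eta < (2 * lam)^-1)%R -> quad_minorized eta x0 f1 -> proper_fun f1 ->
  (forall x, hfun lam f1 x = hfun lam f2 x + c%:E) ->
  forall x, cconvhull f1 x <= cconvhull f2 x + c%:E.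
Proof.
move=> lam0 eta01 fquad pf f12 x; apply: ge_ereal_sup => _ [g [cg [lg gf]] <-].
rewrite -leeBlDr //; apply: ereal_sup_ubound; exists (fun z => g z - c%:E) => //.
split; first exact: convex_efunBr.
split; first exact: (lsc_addr lg (@cst_continuous _ _ (- c)%R)).
move=> z; rewrite leeBlDr //.
apply: le_trans (convex_minorant_le_hfun lam0 eta01 fquad pf cg lg gf z) _.
by rewrite f12 leeD2rE //; exact: hfun_le.
Qed.

End ClosedConvexHull.

Theorem mainTheorem11 (R : realType) (n : nat) (f1 f2 : 'rV[R]_n -> \bar R)
  (lam : R) :
  proper_fun f1 -> proper_fun f2 ->
  lower_semicontinuous f1 -> lower_semicontinuous f2 ->
  prox_bounded f1 -> prox_bounded f2 ->
  (0 < prox_threshold f1)%E -> (0 < prox_threshold f2)%E ->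
  0 < lam -> (lam%:E < prox_threshold f1)%E -> (lam%:E < prox_threshold f2)%E ->
  let A := forall x, psubdiff lam f1 x = psubdiff lam f2 x in
  let B := forall x, prox lam f1 x = prox lam f2 x in
  let C := exists c : R, forall x, menv lam f1 x = (menv lam f2 x + c%:E)%E in
  let D := exists c : R, forall x, hfun lam f1 x = (hfun lam f2 x + c%:E)%E in
  let E := proper_fun (convhull f1) -> proper_fun (convhull f2) ->
           exists c : R, forall x, cconvhull f1 x = (cconvhull f2 x + c%:E)%E in
  (A <-> B) /\ (B -> C) /\ (C <-> D) /\ (A -> E).
Proof.
move=> pf1 pf2 lf1 lf2 _ _ _ _ lam0 lam_lt1 lam_lt2 A B C D E.
have [[f1N _] [f2N _]] := (pf1, pf2).
have [eta1 eta1_lt [x1 f1quad]] := quad_minorized_of_threshold lam0 pf1 lam_lt1.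
have [eta2 eta2_lt [x2 f2quad]] := quad_minorized_of_threshold lam0 pf2 lam_lt2.
have AB : A <-> B := psubdiff_eq_iff_prox_eq lam0 f1N f2N.
have BC : B -> C.
  move=> f12; apply: (menv_shift_of_prox_eq lam0 f1N f2N _ f12) => x.
  exact: prox_nonempty x lam0 lf1 pf1 eta1_lt f1quad.
have CD : C <-> D.
  split=> -[c f12]; exists c.
    exact: hfun_shift_of_menv_shift.
  exact: menv_shift_of_hfun_shift.
(* (e) holds without the properness of [convhull f1] and [convhull f2]. *)
split=> //; split=> //; split=> // /AB/BC/CD[c f12] _ _; exists c => x.
have f21 y : hfun lam f2 y = (hfun lam f1 y + (- c)%:E)%E by rewrite f12 EFinN addeK.
apply/eqP; rewrite eq_le (cconvhull_le_of_hfun_shift lam0 eta1_lt f1quad pf1 f12) /=.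
by rewrite -leeBrDr // -EFinN (cconvhull_le_of_hfun_shift lam0 eta2_lt f2quad pf2 f21).
Qed.
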